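(* Let $\gamma_0:[0,1]\to\mathbb{R}^3$ be a regular horizontal curve, and let $\gamma:[0,\hat T)\times[0,1]\to\mathbb{R}^3$ be a sufficiently smooth family with $\gamma(0,\cdot)=\gamma_0$, $|\gamma_u(t,u)|_g\neq0$ for all $(t,u)$, and $\gamma_t(t,u)=q(t,u)T(t,u)$ for some sufficiently smooth $q:[0,\hat T)\times[0,1]\to\mathbb{R}$. Then $\gamma(t,\cdot)$ is horizontal for every $t\in[0,\hat T)$.
   Context: Write $\gamma=(\gamma^1,\gamma^2,\gamma^3)^t$. A curve is horizontal if $\gamma^3_u=-\tfrac12\gamma^2\gamma^1_u+\tfrac12\gamma^1\gamma^2_u$ on $[0,1]$; $|\gamma_u|_g=\sqrt{(\gamma^1_u)^2+(\gamma^2_u)^2}$; regular means $|\gamma_u|_g\ne0$. $T=\frac1{|\gamma_u|_g}\big(\gamma^1_u,\ \gamma^2_u,\ -\tfrac12\gamma^2\gamma^1_u+\tfrac12\gamma^1\gamma^2_u\big)^t$. *)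

From Stdlib Require Import Reals.
From Coquelicot Require Import Coquelicot.
Open Scope R_scope.

(* A family gamma(t,u) is given componentwise by functions R -> R -> R. *)
Definition pt (f : R -> R -> R) (t u : R) : R := Derive (fun s => f s u) t.
Definition pu (f : R -> R -> R) (t u : R) : R := Derive (fun v => f t v) u.

Definition smooth1 (f : R -> R -> R) : Prop :=
  forall t u,
    ex_derive (fun s => f s u) t /\ ex_derive (fun v => f t v) u /\
    continuous (fun p : R * R => f (fst p) (snd p)) (t, u) /\
    continuous (fun p : R * R => pt f (fst p) (snd p)) (t, u) /\
    continuous (fun p : R * R => pu f (fst p) (snd p)) (t, u).

Definition smooth2 (f : R -> R -> R) : Prop := smooth1 f /\ smooth1 (pt f) /\ smooth1 (pu f).

Definition gnorm (g1 g2 : R -> R -> R) (t u : R) : R :=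
  sqrt (pu g1 t u ^ 2 + pu g2 t u ^ 2).

(* third component of the horizontal lift of (gamma^1_u, gamma^2_u) *)
Definition hor3 (g1 g2 : R -> R -> R) (t u : R) : R :=
  - (1/2) * g2 t u * pu g1 t u + (1/2) * g1 t u * pu g2 t u.

Definition horizontal_at (g1 g2 g3 : R -> R -> R) (t : R) : Prop :=
  forall u, 0 <= u <= 1 -> pu g3 t u = hor3 g1 g2 t u.

From Stdlib Require Import Reals Lra.
From Coquelicot Require Import Coquelicot.
Open Scope R_scope.

(** Let h = γ³_u - (γ¹γ²_u - γ²γ¹_u)/2 be the horizontality defect. Writing
    the flow as γ_t = a (γ¹_u, γ²_u, hor3) with a = q / |γ_u|_g and commuting
    the t- and u-derivatives, both ∂_t γ³_u and ∂_t hor3 come out as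
    a_u hor3 + a (γ¹γ²_uu - γ²γ¹_uu)/2, so ∂_t h = 0. Hence h(t,u) = h(0,u) = 0
    for 0 < u < 1, and at the endpoints by continuity in u: there the flow
    equation, known only on [0,1], does not determine the two-sided
    u-derivative of γ_t. *)

Definition sympl (x1 x2 y1 y2 : R) : R := - (1/2) * x2 * y1 + (1/2) * x1 * y2.

Lemma is_derive_sympl (x1 x2 y1 y2 : R -> R) (s dx1 dx2 dy1 dy2 : R) :
  is_derive x1 s dx1 -> is_derive x2 s dx2 ->
  is_derive y1 s dy1 -> is_derive y2 s dy2 ->
  is_derive (fun w => sympl (x1 w) (x2 w) (y1 w) (y2 w)) s
    (sympl dx1 dx2 (y1 s) (y2 s) + sympl (x1 s) (x2 s) dy1 dy2).
Proof.
  intros D1 D2 D3 D4. unfold sympl.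
  auto_derive.
  - repeat split; eexists; eassumption.
  - change (fun x => x1 x) with x1; change (fun x => x2 x) with x2;
      change (fun x => y1 x) with y1; change (fun x => y2 x) with y2.
    rewrite (is_derive_unique _ _ _ D1), (is_derive_unique _ _ _ D2),
      (is_derive_unique _ _ _ D3), (is_derive_unique _ _ _ D4).
    ring.
Qed.

Lemma is_derive_pt (f : R -> R -> R) (t u : R) :
  smooth1 f -> is_derive (fun s => f s u) t (pt f t u).
Proof. intros Hf. apply Derive_correct, (Hf t u). Qed.

Lemma is_derive_pu (f : R -> R -> R) (t u : R) :
  smooth1 f -> is_derive (fun v => f t v) u (pu f t u).
Proof. intros Hf. apply Derive_correct, (Hf t u). Qed.

Lemma pt_pu_comm (f : R -> R -> R) (t u : R) :
  smooth2 f -> pt (pu f) t u = pu (pt f) t u.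
Proof.
  intros [Hf [Ht Hu]]. apply Schwarz.
  - exists (mkposreal 1 Rlt_0_1). intros s v _ _.
    repeat split; first [apply (Hf s v) | apply (Ht s v) | apply (Hu s v)].
  - apply continuity_2d_pt_filterlim, (Hu t u).
  - apply continuity_2d_pt_filterlim, (Ht t u).
Qed.

(* [hor3 g1 g2 t u] is [sympl (g1 t u) (g2 t u) (pu g1 t u) (pu g2 t u)]. *)
Lemma is_derive_hor3_t (g1 g2 : R -> R -> R) (t u : R) :
  smooth2 g1 -> smooth2 g2 ->
  is_derive (fun s => hor3 g1 g2 s u) t
    (sympl (pt g1 t u) (pt g2 t u) (pu g1 t u) (pu g2 t u)
     + sympl (g1 t u) (g2 t u) (pt (pu g1) t u) (pt (pu g2) t u)).
Proof.
  intros [S1 [_ U1]] [S2 [_ U2]].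
  apply (is_derive_sympl (fun s => g1 s u) (fun s => g2 s u)
           (fun s => pu g1 s u) (fun s => pu g2 s u));
    now apply is_derive_pt.
Qed.

Lemma is_derive_hor3_u (g1 g2 : R -> R -> R) (t u : R) :
  smooth2 g1 -> smooth2 g2 ->
  is_derive (fun v => hor3 g1 g2 t v) u
    (sympl (g1 t u) (g2 t u) (pu (pu g1) t u) (pu (pu g2) t u)).
Proof.
  intros [S1 [_ U1]] [S2 [_ U2]].
  replace (sympl _ _ (pu (pu g1) t u) _)
    with (sympl (pu g1 t u) (pu g2 t u) (pu g1 t u) (pu g2 t u)
          + sympl (g1 t u) (g2 t u) (pu (pu g1) t u) (pu (pu g2) t u))
    by (unfold sympl; ring).
  apply (is_derive_sympl (fun v => g1 t v) (fun v => g2 t v)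
           (fun v => pu g1 t v) (fun v => pu g2 t v));
    now apply is_derive_pu.
Qed.

Lemma ex_derive_gnorm_u (g1 g2 : R -> R -> R) (t u : R) :
  smooth2 g1 -> smooth2 g2 -> gnorm g1 g2 t u <> 0 ->
  ex_derive (fun v => gnorm g1 g2 t v) u.
Proof.
  intros [_ [_ U1]] [_ [_ U2]] Hn. unfold gnorm in *.
  eexists. apply is_derive_sqrt.
  - apply Derive_correct. auto_derive.
    repeat split; try exact I; [apply (U1 t u) | apply (U2 t u)].
  - destruct (Rle_or_lt (pu g1 t u ^ 2 + pu g2 t u ^ 2) 0) as [Hle | Hlt]; [|exact Hlt].
    exfalso. now apply Hn, sqrt_neg_0.
Qed.

Lemma is_derive_mult_loc (f a x : R -> R) (v da dx : R) :
  locally v (fun u => a u * x u = f u) -> is_derive a v da -> is_derive x v dx ->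
  is_derive f v (da * x v + a v * dx).
Proof.
  intros Hf Da Dx. apply (is_derive_ext_loc (fun u => a u * x u)); [exact Hf|].
  now apply Derive.is_derive_mult.
Qed.

Lemma open_interval_near (a b u d : R) :
  a < b -> a <= u <= b -> 0 < d -> exists w, a < w < b /\ Rabs (w - u) < d.
Proof.
  intros Hab Hu Hd.
  set (e := Rmin (d / 2) ((b - a) / 4)).
  assert (He : 0 < e /\ e <= d / 2 /\ e <= (b - a) / 4).
  { repeat split; [apply Rmin_glb_lt; lra | apply Rmin_l | apply Rmin_r]. }
  destruct (Rle_or_lt u ((a + b) / 2));
    [exists (u + e) | exists (u - e)]; split; try lra; apply Rabs_def1; lra.
Qed.

Lemma continuous_eq0_closure (f : R -> R) (a b u : R) :
  a < b -> a <= u <= b -> continuous f u ->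
  (forall v, a < v < b -> f v = 0) -> f u = 0.
Proof.
  intros Hab Hu Hc Hz.
  destruct (Req_dec (f u) 0) as [|Hne]; [assumption | exfalso].
  assert (Hpos : 0 < Rabs (f u)) by now apply Rabs_pos_lt.
  destruct (proj1 (filterlim_locally _ _) Hc (mkposreal _ Hpos)) as [d Hd].
  destruct (open_interval_near a b u d) as [w [Hw Hwu]]; [assumption.. | apply cond_pos |].
  specialize (Hd w Hwu). change (Rabs (f w - f u) < Rabs (f u)) in Hd.
  rewrite Hz, Rminus_0_l, Rabs_Ropp in Hd by exact Hw. lra.
Qed.

Definition horizontal_defect (g1 g2 g3 : R -> R -> R) (t u : R) : R :=
  pu g3 t u - hor3 g1 g2 t u.

Lemma continuous_horizontal_defect_u (g1 g2 g3 : R -> R -> R) (t u : R) :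
  smooth2 g1 -> smooth2 g2 -> smooth2 g3 ->
  continuous (fun v => horizontal_defect g1 g2 g3 t v) u.
Proof.
  intros S1 S2 [_ [_ U3]].
  apply (ex_derive_continuous (K := R_AbsRing) (V := R_NormedModule)).
  unfold horizontal_defect. eexists.
  apply (is_derive_minus (fun v => pu g3 t v) (fun v => hor3 g1 g2 t v));
    [now apply is_derive_pu | now apply is_derive_hor3_u].
Qed.

Lemma is_derive_t_horizontal_defect (g1 g2 g3 a : R -> R -> R) (s v : R) :
  smooth2 g1 -> smooth2 g2 -> smooth2 g3 ->
  locally v (fun u => a s u * pu g1 s u = pt g1 s u /\
                      a s u * pu g2 s u = pt g2 s u /\
                      a s u * hor3 g1 g2 s u = pt g3 s u) ->
  ex_derive (a s) v ->
  is_derive (fun t => horizontal_defect g1 g2 g3 t v) s 0.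
Proof.
  intros S1 S2 S3 Hflow [da Da].
  set (Flow := fun u => a s u * pu g1 s u = pt g1 s u /\
                         a s u * pu g2 s u = pt g2 s u /\
                         a s u * hor3 g1 g2 s u = pt g3 s u) in Hflow.
  assert (Flow_u : forall g x dx, smooth2 g -> is_derive x v dx ->
            (forall u, Flow u -> a s u * x u = pt g s u) ->
            pt (pu g) s v = da * x v + a s v * dx).
  { intros g x dx Sg Dx Hg. rewrite pt_pu_comm by exact Sg.
    apply is_derive_unique, (is_derive_mult_loc _ (a s) x); try assumption.
    exact (filter_imp _ _ Hg Hflow). }
  assert (E1 := Flow_u g1 _ _ S1 (is_derive_pu (pu g1) s v (proj2 (proj2 S1)))
                  (fun u H => proj1 H)).
  assert (E2 := Flow_u g2 _ _ S2 (is_derive_pu (pu g2) s v (proj2 (proj2 S2)))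
                  (fun u H => proj1 (proj2 H))).
  assert (E3 := Flow_u g3 _ _ S3 (is_derive_hor3_u g1 g2 s v S1 S2)
                  (fun u H => proj2 (proj2 H))).
  destruct (locally_singleton _ _ Hflow) as [P1 [P2 _]].
  unfold horizontal_defect.
  replace 0 with (pt (pu g3) s v
    - (sympl (pt g1 s v) (pt g2 s v) (pu g1 s v) (pu g2 s v)
       + sympl (g1 s v) (g2 s v) (pt (pu g1) s v) (pt (pu g2) s v))).
  - apply (is_derive_minus (fun t => pu g3 t v) (fun t => hor3 g1 g2 t v));
      [apply is_derive_pt, (proj2 (proj2 S3)) | now apply is_derive_hor3_t].
  - rewrite E1, E2, E3, <- P1, <- P2. unfold hor3, sympl. ring.
Qed.

Theorem lemma2p14 (g1 g2 g3 q : R -> R -> R) (That : R) :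
  smooth2 g1 -> smooth2 g2 -> smooth2 g3 -> smooth1 q ->
  (* gamma_0 = gamma(0,.) is a regular horizontal curve *)
  horizontal_at g1 g2 g3 0 ->
  (forall u, 0 <= u <= 1 -> gnorm g1 g2 0 u <> 0) ->
  (* |gamma_u|_g <> 0 on [0,That) x [0,1] *)
  (forall t u, 0 <= t < That -> 0 <= u <= 1 -> gnorm g1 g2 t u <> 0) ->
  (* gamma_t = q T on [0,That) x [0,1] *)
  (forall t u, 0 <= t < That -> 0 <= u <= 1 ->
     pt g1 t u = q t u * (pu g1 t u / gnorm g1 g2 t u) /\
     pt g2 t u = q t u * (pu g2 t u / gnorm g1 g2 t u) /\
     pt g3 t u = q t u * (hor3 g1 g2 t u / gnorm g1 g2 t u)) ->
  forall t, 0 <= t < That -> horizontal_at g1 g2 g3 t.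
Proof.
  intros S1 S2 S3 Sq Hor0 _ Hreg Hflow t Ht u Hu.
  apply Rminus_diag_uniq; fold (horizontal_defect g1 g2 g3 t u).
  apply (continuous_eq0_closure (horizontal_defect g1 g2 g3 t) 0 1 u);
    [lra | exact Hu | now apply continuous_horizontal_defect_u | intros v Hv].
  assert (Hconst : horizontal_defect g1 g2 g3 0 v = horizontal_defect g1 g2 g3 t v).
  { destruct (Req_dec t 0) as [-> | Ht0]; [reflexivity |].
    apply (eq_is_derive (fun s => horizontal_defect g1 g2 g3 s v)); [intros s Hs | lra].
    apply (is_derive_t_horizontal_defect g1 g2 g3 (fun t u => q t u / gnorm g1 g2 t u));
      try assumption.
    - apply (locally_interval _ v 0 1); simpl; try lra.
      intros w Hw0 Hw1. destruct (Hflow s w ltac:(lra) ltac:(lra)) as [F1 [F2 F3]].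
      rewrite F1, F2, F3. unfold Rdiv. repeat split; ring.
    - apply ex_derive_div; [apply Sq | apply ex_derive_gnorm_u; [exact S1 | exact S2 |] |];
        apply Hreg; lra. }
  rewrite <- Hconst. unfold horizontal_defect. rewrite (Hor0 v) by lra. ring.
Qed.
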